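(* Let $n$ be a positive integer, and suppose there exists a hexagonal permutation $\pi$ with $n$ dots. Then $n$ is odd, and the dots of $\pi$ are contained in a Lee sphere of radius $(n-1)/2$.
   Context: Model the cells (hexagons) of the hexagonal grid by $\mathbb{Z}^2$, where cell $(x,y)$ is adjacent to the six cells $(x\pm1,y)$, $(x,y\pm1)$, $(x+1,y+1)$, $(x-1,y-1)$. The ''rows'' of the hexagonal grid in its three natural directions are the sets $\{y=c\}$, $\{x=c\}$ and $\{x-y=c\}$ for $c\in\mathbb{Z}$; two rows of the same direction are consecutive if their constants $c$ differ by $1$. A set of dots is a finite nonempty set of cells. A hexagonal permutation with $n$ dots is a set $\pi$ of $n$ cells such that, for each of the three directions, the rows of that direction containing a dot of $\pi$ are exactly $n$ consecutive rows, and each of these rows contains exactly one dot of $\pi$. The distance between two cells is the length of a shortest path of successively adjacent cells joining them; for cells $(x,y)$ and $(a,b)$ it equals $\max(|x-a|,|y-b|,|(x-a)-(y-b)|)$. A Lee sphere of radius $r$ with centre $(a,b)$ is the set of all cells at distance at most $r$ from $(a,b)$. *)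

From Stdlib Require Import ZArith List Lia.
Open Scope Z_scope.

Definition cell := (Z * Z)%type.

(* The three row directions: row constant of a cell in each direction. *)
Definition rowY (p : cell) : Z := snd p.
Definition rowX (p : cell) : Z := fst p.
Definition rowD (p : cell) : Z := fst p - snd p.

Definition is_dot_set (n : nat) (pi : list cell) : Prop :=
  NoDup pi /\ length pi = n.

Definition rows_ok (f : cell -> Z) (n : nat) (pi : list cell) : Prop :=
  exists c : Z,
    (forall k : Z, (exists p, In p pi /\ f p = k) <-> (c <= k < c + Z.of_nat n)) /\
    (forall k : Z, c <= k < c + Z.of_nat n ->
       forall p q, In p pi -> In q pi -> f p = k -> f q = k -> p = q).

Definition hex_perm (n : nat) (pi : list cell) : Prop :=
  is_dot_set n pi /\ rows_ok rowY n pi /\ rows_ok rowX n pi /\ rows_ok rowD n pi.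

Definition hex_dist (p q : cell) : Z :=
  Z.max (Z.abs (fst p - fst q))
        (Z.max (Z.abs (snd p - snd q))
               (Z.abs ((fst p - fst q) - (snd p - snd q)))).

Definition lee_sphere (r : Z) (ctr : cell) (p : cell) : Prop :=
  hex_dist p ctr <= r.

From Stdlib Require Import ZArith List Lia Permutation.
Open Scope Z_scope.

(* The rows of each direction are c, ..., c + n - 1 with one dot each, so
   summing a row coordinate over the dots gives n c + n(n-1)/2.  Since
   rowD = rowX - rowY, the three sums are linked: with the row ranges starting
   at a (for x), b (for y) and c (for x - y), this forces n (a - b - c) =
   n(n-1)/2, i.e. n = 2m + 1 with m = a - b - c.  The dots then lie in
   a <= x <= a + 2m, b <= y <= b + 2m and a - b - m <= x - y <= a - b + m,
   which is exactly the Lee sphere of radius m around (a + m, b + m). *)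

Definition sumZ (l : list Z) : Z := fold_right Z.add 0 l.

Lemma sumZ_app (l1 l2 : list Z) : sumZ (l1 ++ l2) = sumZ l1 + sumZ l2.
Proof. induction l1; simpl; lia. Qed.

Lemma sumZ_Permutation (l1 l2 : list Z) : Permutation l1 l2 -> sumZ l1 = sumZ l2.
Proof. induction 1; simpl; lia. Qed.

Lemma sumZ_map_sub {A : Type} (f g : A -> Z) (l : list A) :
  sumZ (map (fun x => f x - g x) l) = sumZ (map f l) - sumZ (map g l).
Proof. induction l; simpl; lia. Qed.

Lemma sumZ_consecutive (c : Z) (n : nat) :
  2 * sumZ (map (fun i => c + Z.of_nat i) (seq 0 n)) = Z.of_nat n * (2 * c + Z.of_nat n - 1).
Proof.
  induction n as [|n IHn]; [reflexivity|].
  rewrite seq_S, map_app, sumZ_app; cbn [map sumZ fold_right].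
  rewrite Nat2Z.inj_succ; lia.
Qed.

Section RowSums.

Variables (f : cell -> Z) (n : nat) (pi : list cell) (c : Z).

Hypothesis pi_uniq : NoDup pi.
Hypothesis rows_hit : forall k, (exists p, In p pi /\ f p = k) <-> c <= k < c + Z.of_nat n.
Hypothesis rows_single : forall k, c <= k < c + Z.of_nat n ->
  forall p q, In p pi -> In q pi -> f p = k -> f q = k -> p = q.

Lemma row_values_Permutation :
  Permutation (map f pi) (map (fun i => c + Z.of_nat i) (seq 0 n)).
Proof.
  apply NoDup_Permutation.
  - apply NoDup_map_NoDup_ForallPairs; [|exact pi_uniq].
    intros p q Hp Hq Hpq; apply (rows_single (f p)); auto.
    apply rows_hit; eauto.
  - apply NoDup_map_NoDup_ForallPairs; [|apply seq_NoDup].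
    intros i j _ _ Hij; lia.
  - intros k; rewrite !in_map_iff; split.
    + intros [p [<- Hp]].
      assert (Hk : c <= f p < c + Z.of_nat n) by (apply rows_hit; eauto).
      exists (Z.to_nat (f p - c)); split; [lia|].
      apply in_seq; lia.
    + intros [i [<- Hi]]; apply in_seq in Hi.
      destruct (proj2 (rows_hit (c + Z.of_nat i))) as [p [Hp Hfp]]; [lia|].
      eauto.
Qed.

Lemma rows_sum_double :
  2 * sumZ (map f pi) = Z.of_nat n * (2 * c + Z.of_nat n - 1).
Proof.
  rewrite (sumZ_Permutation _ _ row_values_Permutation); apply sumZ_consecutive.
Qed.

End RowSums.

Lemma rows_ok_sum (f : cell -> Z) (n : nat) (pi : list cell) :
  NoDup pi -> rows_ok f n pi ->
  exists c, 2 * sumZ (map f pi) = Z.of_nat n * (2 * c + Z.of_nat n - 1) /\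
            forall p, In p pi -> c <= f p < c + Z.of_nat n.
Proof.
  intros Huniq [c [Hhit Hsingle]]; exists c; split.
  - exact (rows_sum_double f n pi c Huniq Hhit Hsingle).
  - intros p Hp; apply Hhit; eauto.
Qed.

Lemma lee_sphere_of_row_bounds (m a b : Z) (p : cell) :
  a <= rowX p <= a + 2 * m -> b <= rowY p <= b + 2 * m ->
  a - b - m <= rowD p <= a - b + m ->
  lee_sphere m (a + m, b + m) p.
Proof.
  destruct p as [x y]; unfold lee_sphere, hex_dist, rowX, rowY, rowD; cbn [fst snd].
  intros; repeat apply Z.max_lub; apply Z.abs_le; lia.
Qed.

Theorem theorem1 (n : nat) (pi : list cell) :
  (0 < n)%nat -> hex_perm n pi ->
  Nat.Odd n /\
  exists ctr : cell, forall p, In p pi -> lee_sphere ((Z.of_nat n - 1) / 2) ctr p.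
Proof.
  intros Hn [[Huniq _] [HY [HX HD]]].
  destruct (rows_ok_sum _ _ _ Huniq HX) as [a [Sa Ra]].
  destruct (rows_ok_sum _ _ _ Huniq HY) as [b [Sb Rb]].
  destruct (rows_ok_sum _ _ _ Huniq HD) as [c [Sc Rc]].
  assert (Hsum : sumZ (map rowD pi) = sumZ (map rowX pi) - sumZ (map rowY pi))
    by apply sumZ_map_sub.
  set (m := a - b - c).
  assert (Hn_odd : Z.of_nat n = 2 * m + 1).
  { assert (Hprod : Z.of_nat n * (Z.of_nat n - 1 - 2 * m) = 0) by (unfold m; nia).
    apply Z.mul_eq_0 in Hprod; lia. }
  split.
  - exists (Z.to_nat m); lia.
  - replace ((Z.of_nat n - 1) / 2) with m
      by (rewrite Hn_odd, Z.add_simpl_r, Z.mul_comm, Z.div_mul; lia).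
    exists (a + m, b + m); intros p Hp.
    specialize (Ra p Hp); specialize (Rb p Hp); specialize (Rc p Hp).
    apply lee_sphere_of_row_bounds; unfold m in *; lia.
Qed.
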